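(* Let $(X_n,\|\cdot\|_n)_{n\ge1}$ be a sequence of Banach spaces and let $\|\cdot\|$ be the norm on $c_{00}((X_n))$ defined in the context. Let $m\in\mathbb{N}$ and $x_n\in X_n$ for $n=1,\dots,m$. Then $$\sum_{n=1}^m\frac12\|x_n\|_n\le \sum_{n=1}^m\Big(1-\frac{1}{n+1}\Big)\|x_n\|_n\le \|(x_1,\dots,x_m)\|\le\sum_{n=1}^m\|x_n\|_n.$$
   Context: $c_{00}((X_n))$ is the vector space of sequences $(x_1,x_2,\dots)$ with $x_k\in X_k$ and only finitely many $x_k\ne0$; $(x_1,\dots,x_n)$ denotes $(x_1,\dots,x_n,0,0,\dots)$. The norm is defined inductively: $\|(x_1)\|=\|x_1\|_1$ (the norm of $X_1$), and for $n\ge2$, $$\|(x_1,\dots,x_n)\|=\Big(1-\tfrac{1}{n+1}\Big)\big(\|x_n\|_n+\|(x_1,\dots,x_{n-1})\|\big)+\tfrac{1}{n+1}\max\Big\{\tfrac{\|x_n\|_n}{n},\ \|(x_1,\dots,x_{n-1})\|\Big\}.$$ *)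

From HB Require Import structures.
From mathcomp Require Import all_boot all_order all_algebra.
From mathcomp Require Import all_classical all_reals all_analysis.
Set Implicit Arguments. Unset Strict Implicit. Unset Printing Implicit Defensive.
Import Order.TTheory GRing.Theory Num.Theory.
Import numFieldNormedType.Exports.
Local Open Scope ring_scope.

(* The inductively defined norm on c00((X_n)), evaluated on (x_1,...,x_m).
   Spaces are indexed by nat; index 0 is unused (paper indexes from 1).
   c00norm x 0 = 0 (empty sequence, unused), c00norm x 1 = ||x_1||_1, and for
   n >= 2 the recursive formula of the paper. *)
Fixpoint c00norm (R : realType) (X : nat -> completeNormedModType R)
    (x : forall n, X n) (m : nat) : R :=
  match m with
  | 0 => 0
  | 1 => `|x 1%N|
  | S (S k as p) =>
      let n := p.+1 in
      (1 - (n.+1)%:R^-1) * (`|x n| + c00norm x p)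
      + (n.+1)%:R^-1 * Num.max (`|x n| / n%:R) (c00norm x p)
  end.

From HB Require Import structures.
From mathcomp Require Import all_boot all_order all_algebra.
From mathcomp Require Import all_classical all_reals all_analysis.
From mathcomp Require Import lra.
Set Implicit Arguments. Unset Strict Implicit. Unset Printing Implicit Defensive.
Import Order.TTheory GRing.Theory Num.Theory.
Import numFieldNormedType.Exports.
Local Open Scope ring_scope.

(* With t := ||x_m||_m, s := ||(x_1,...,x_{m-1})|| and a := 1/(m+1), the
   recursion writes ||(x_1,...,x_m)|| as the convex combination
   (1 - a)(t + s) + a u of t + s and u := max(t/m, s).  Since s <= u <= t + s
   it lies between (1 - a) t + s and t + s, so induction on m gives the two
   outer estimates; the leftmost one is just 1/(n+1) <= 1/2 for n >= 1. *)

Lemma convex_step_ge (R : realFieldType) (a t s u : R) :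
  0 <= a -> s <= u -> (1 - a) * t + s <= (1 - a) * (t + s) + a * u.
Proof. by move=> a_ge0 /(ler_wpM2l a_ge0); rewrite mulrDr; lra. Qed.

Lemma convex_step_le (R : realFieldType) (a t s u : R) :
  0 <= a -> u <= t + s -> (1 - a) * (t + s) + a * u <= t + s.
Proof. by move=> a_ge0 /(ler_wpM2l a_ge0); lra. Qed.

Lemma weight_ge0 (R : realFieldType) (n : nat) : 0 <= 1 - (n.+1)%:R^-1 :> R.
Proof. by rewrite subr_ge0 invf_le1 // ler1n. Qed.

Lemma half_le_weight (R : realFieldType) (n : nat) :
  (1 <= n)%N -> 2%:R^-1 <= 1 - (n.+1)%:R^-1 :> R.
Proof.
move=> n_ge1; rewrite lerBrDr -lerBrDl.
have -> : 1 - 2%:R^-1 = 2%:R^-1 :> R by rewrite {1}(splitr 1) mul1r addrK.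
by rewrite lef_pV2 ?posrE ?ltr0n // ler_nat ltnS.
Qed.

Section C00Norm.

Variables (R : realType) (X : nat -> completeNormedModType R).
Variable x : forall n, X n.

Lemma c00normSS (k : nat) :
  c00norm x k.+2 =
    (1 - (k.+3)%:R^-1) * (`|x k.+2| + c00norm x k.+1)
    + (k.+3)%:R^-1 * Num.max (`|x k.+2| / (k.+2)%:R) (c00norm x k.+1).
Proof. by []. Qed.

Lemma weighted_sum_le_c00norm (m : nat) :
  \sum_(1 <= n < m.+1) ((1 - (n.+1)%:R^-1) * `|x n|) <= c00norm x m.
Proof.
case: m => [|k]; first by rewrite big_geq.
elim: k => [|k IHk]; first by rewrite big_nat1 ler_piMl // lerBlDr lerDl.
rewrite big_nat_recr // [leLHS]addrC c00normSS.
apply: le_trans _ (convex_step_ge _ _ _); first by rewrite lerD2l.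
  by rewrite invr_ge0.
by rewrite le_max lexx orbT.
Qed.

Lemma c00norm_ge0 (m : nat) : 0 <= c00norm x m.
Proof.
apply: le_trans _ (weighted_sum_le_c00norm m).
by apply: sumr_ge0 => n _; rewrite mulr_ge0 ?weight_ge0.
Qed.

Lemma c00norm_le_sum (m : nat) : c00norm x m <= \sum_(1 <= n < m.+1) `|x n|.
Proof.
case: m => [|k]; first by rewrite big_geq.
elim: k => [|k IHk]; first by rewrite big_nat1.
rewrite big_nat_recr // [leRHS]addrC c00normSS.
apply: le_trans (convex_step_le _ _) _; first by rewrite invr_ge0.
  rewrite ge_max [X in _ && X]lerDr normr_ge0 andbT.
  apply: (@le_trans _ _ `|x k.+2|); last by rewrite lerDl c00norm_ge0.
  by rewrite ler_pdivrMr ?ltr0n // ler_peMr // ler1n.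
by rewrite lerD2l.
Qed.

End C00Norm.

Theorem proposition1p1 (R : realType) (X : nat -> completeNormedModType R)
    (x : forall n, X n) (m : nat) (hm : (1 <= m)%N) :
  \sum_(1 <= n < m.+1) (2%:R^-1 * `|x n|)
    <= \sum_(1 <= n < m.+1) ((1 - (n.+1)%:R^-1) * `|x n|)
  /\ \sum_(1 <= n < m.+1) ((1 - (n.+1)%:R^-1) * `|x n|) <= c00norm x m
  /\ c00norm x m <= \sum_(1 <= n < m.+1) `|x n|.
Proof.
split; last by split; [exact: weighted_sum_le_c00norm | exact: c00norm_le_sum].
rewrite big_nat_cond [X in _ <= X]big_nat_cond.
apply: ler_sum => n /andP[/andP[n_ge1 _] _].
by rewrite ler_wpM2r ?half_le_weight.
Qed.
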